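(* Let $S_1$ and $S_2$ be path strings containing no symbolic links that refer to the same file on the file system, where $S_2$ is canonical and $S_1$ may or may not be canonical. Run the main loop of sanitize on $S_1$. Then at every iteration $i$ of the loop, one of the following holds: (1) the string representation of the stack is a prefix of $S_2$; or (2) if a directory token pushed onto the stack made the string representation of the stack cease to be a prefix of $S_2$, then this directory token is eventually popped off the stack by a subsequent ''..'' token.
   Context: Path strings are strings over valid filename characters together with ''.'' and ''/''. Tokenization splits a path string on every maximal run of consecutive ''/'' characters, discarding empty pieces. A path string is canonical if it is ''/'' or of the form ''/$a_1$/$a_2$/.../$a_n$'' with $n\ge1$, where each $a_j$ is a nonempty filename containing no ''/'' and different from ''.'' and ''..''. The main loop of sanitize on a path string $U$: start with an empty stack and process the tokens of $U$ from left to right; if the token is ''..'', pop the top of the stack if the stack is nonempty (otherwise do nothing); if the token is ''.'', do nothing; otherwise push the token. The string representation of a stack with contents $t_1,\dots,t_m$ (bottom to top) is ''/'' if $m=0$ and ''/$t_1$/$t_2$/.../$t_m$'' if $m\ge1$. A string $A$ is a prefix of a string $B$ if $|A|\le|B|$ and $A[j]=B[j]$ for every position $j$ of $A$ (character-wise prefix). Path strings are interpreted in a hierarchical (tree-shaped) file system rooted at ''/'', with no symbolic links: starting at the root, a filename token moves to the child of that name, ''.'' stays in the current directory, and ''..'' moves to the parent directory (the parent of the root being the root). Two path strings refer to the same file if this resolution leads to the same file. *)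

From mathcomp Require Import all_boot.
Set Implicit Arguments. Unset Strict Implicit. Unset Printing Implicit Defensive.

Section Paths.
Variables (C : eqType) (sl dt : C).

Definition dot_tok : seq C := [:: dt].
Definition dotdot_tok : seq C := [:: dt; dt].

Fixpoint split_slash (s : seq C) : seq (seq C) :=
  match s with
  | [::] => [:: [::]]
  | c :: s' =>
      let r := split_slash s' in
      if c == sl then [::] :: r
      else match r with
           | [::] => [:: [:: c]]
           | w :: r' => (c :: w) :: r'
           end
  end.

(* Tokenization: split on maximal runs of "/" and discard empty pieces
   (equivalently: split on every "/" and discard empty pieces). *)
Definition tokens (s : seq C) : seq (seq C) :=
  filter (fun w => w != [::]) (split_slash s).

(* A stack is a list of tokens, bottom first, top last. *)
Definition pop (st : seq (seq C)) : seq (seq C) := take (size st).-1 st.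

Definition sanitize_step (st : seq (seq C)) (t : seq C) : seq (seq C) :=
  if t == dotdot_tok then pop st
  else if t == dot_tok then st
  else rcons st t.

Definition run (toks : seq (seq C)) : seq (seq C) :=
  foldl sanitize_step [::] toks.

Definition stack_repr (st : seq (seq C)) : seq C :=
  if st is [::] then [:: sl] else flatten (map (fun t => sl :: t) st).

Definition good_name (a : seq C) : bool :=
  [&& a != [::], sl \notin a, a != dot_tok & a != dotdot_tok].

Definition canonical (s : seq C) : Prop :=
  exists names : seq (seq C), all good_name names /\ s = stack_repr names.

(* A node is
   identified by the sequence of names on the path from the root; the file
   system is the (prefix-closed, root-containing) set of existing nodes. *)
Definition is_tree (fs : pred (seq (seq C))) : Prop :=
  fs [::] /\ forall (p : seq (seq C)) (a : seq C), fs (rcons p a) -> fs p.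

(* resolution of one token; None = resolution fails (no such file) *)
Definition resolve_step (fs : pred (seq (seq C))) (o : option (seq (seq C)))
    (t : seq C) : option (seq (seq C)) :=
  match o with
  | None => None
  | Some cur =>
      if t == dot_tok then Some cur
      else if t == dotdot_tok then Some (take (size cur).-1 cur) (* parent; parent of root is root *)
      else if fs (rcons cur t) then Some (rcons cur t) else None
  end.

Definition resolve (fs : pred (seq (seq C))) (s : seq C) : option (seq (seq C)) :=
  foldl (resolve_step fs) (Some [::]) (tokens s).

Definition same_file (fs : pred (seq (seq C))) (s1 s2 : seq C) : Prop :=
  exists f, resolve fs s1 = Some f /\ resolve fs s2 = Some f.

End Paths.

(** Sanitizing a path reproduces name resolution whenever resolution succeeds,
    so the main loop run on S1 ends with the stack of names of S2.  If the
    stack stops representing a prefix of S2, look at the last prefix stack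
    before it: the next token must be a pushed name t (popping or staying
    keeps a prefix).  While t is on the stack the stack cannot return to a
    prefix, and as soon as the stack falls below t it is back at the last
    prefix stack; so the stack stays at least as high as t until some ".."
    removes t, which must happen because the final stack is a prefix. *)

From mathcomp Require Import all_boot zify.
Set Implicit Arguments. Unset Strict Implicit. Unset Printing Implicit Defensive.

Lemma stays_above_or_first_below (f : nat -> nat) M j n : j <= n -> M <= f j ->
  (forall l, j <= l <= n -> M <= f l) \/
  exists k, [/\ j < k <= n, (forall l, j <= l < k -> M <= f l) & f k < M].
Proof.
move=> le_jn fjM; elim: n le_jn => [|n IH].
  by rewrite leqn0 => /eqP <-; left => l; rewrite -eqn_leq => /eqP <-.
rewrite leq_eqVlt ltnS => /predU1P [<- | le_jn]; first by left => l; rewrite -eqn_leq => /eqP <-.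
have [above | [k [? ? ?]]] := IH le_jn; last by right; exists k; split => //; lia.
have [fnM | fnM] := leqP M (f n.+1).
  by left => l /andP [jl]; rewrite leq_eqVlt => /predU1P [-> | ln] //; apply: above; lia.
by right; exists n.+1; split; [lia | move=> l ?; apply: above; lia | ].
Qed.

Section Sanitize.
Variables (C : eqType) (sl dt : C).

Lemma split_slash_neq0 s : split_slash sl s != [::].
Proof. by elim: s => //= c s _; case: ifP => // _; case: (split_slash sl s). Qed.

Lemma split_slash_cat t s : sl \notin t ->
  split_slash sl (t ++ s) =
  (t ++ head [::] (split_slash sl s)) :: behead (split_slash sl s).
Proof.
elim: t => [|c t IH] /=; first by case: (split_slash sl s) (split_slash_neq0 s).
by rewrite inE negb_or eq_sym => /andP [/negbTE -> /IH ->].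
Qed.

Lemma split_slash_flatten names : all (fun a => sl \notin a) names ->
  split_slash sl (flatten (map (fun t => sl :: t) names)) = [::] :: names.
Proof.
elim: names => [|a names IH] //= /andP [sl_a sl_names].
by rewrite eqxx split_slash_cat // IH //= cats0.
Qed.

Lemma tokens_stack_repr names : all (good_name sl dt) names ->
  tokens sl (stack_repr sl names) = names.
Proof.
case: names => [|a names] good; first by rewrite /tokens /= eqxx.
have no_sl : all (fun a => sl \notin a) (a :: names).
  by apply: sub_all good => x /and4P [].
rewrite /tokens /stack_repr split_slash_flatten //=.
case/andP: good => /and4P [-> _ _ _] good; congr cons.
by apply/all_filterP; apply: sub_all good => x /and4P [].
Qed.

Lemma resolve_from_None fs ts : foldl (resolve_step dt fs) None ts = None.
Proof. by elim: ts. Qed.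

Lemma resolve_good_names fs p ts f : all (good_name sl dt) ts ->
  foldl (resolve_step dt fs) (Some p) ts = Some f -> f = p ++ ts.
Proof.
elim: ts p => [|t ts IH] p /=; first by rewrite cats0 => _ [].
case/andP => /and4P [_ _ /negbTE -> /negbTE ->] good.
case: ifP => _; last by rewrite resolve_from_None.
by move/IH => -> //; rewrite cat_rcons.
Qed.

Lemma resolve_run fs p ts f :
  foldl (resolve_step dt fs) (Some p) ts = Some f -> foldl (sanitize_step dt) p ts = f.
Proof.
elim: ts p => [|t ts IH] p /=; first by case.
have dot_neq_dotdot : (dot_tok dt == dotdot_tok dt) = false by apply/eqP => -[].
rewrite {2}/sanitize_step; case: ifP => [/eqP -> | _]; first by rewrite dot_neq_dotdot => /IH.
case: ifP => [_ /IH // | _].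
by case: ifP => _; [apply: IH | rewrite resolve_from_None].
Qed.

Lemma run_tokens_same_file fs S1 names : all (good_name sl dt) names ->
  same_file sl dt fs S1 (stack_repr sl names) -> run dt (tokens sl S1) = names.
Proof.
move=> good [f [res1 res2]]; rewrite /resolve tokens_stack_repr // in res2.
by rewrite /run (resolve_run res1) (resolve_good_names good res2).
Qed.

Lemma take_sanitize_step m s t : m <= size s -> m <= size (sanitize_step dt s t) ->
  take m (sanitize_step dt s t) = take m s.
Proof.
rewrite /sanitize_step /pop; case: ifP => _.
  by move=> _ le_m; rewrite take_takel // -(size_takel (leq_pred (size s))).
by case: ifP => _ // le_m _; rewrite -cats1 takel_cat.
Qed.

Lemma size_sanitize_step_ge s t : (size s).-1 <= size (sanitize_step dt s t).
Proof.
rewrite /sanitize_step /pop; case: ifP => _; first by rewrite size_takel ?leq_pred.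
by case: ifP => _; rewrite ?size_rcons; lia.
Qed.

Lemma sanitize_step_shrinks s t :
  size (sanitize_step dt s t) < size s -> t = dotdot_tok dt.
Proof.
rewrite /sanitize_step; case: ifP => [/eqP // | _].
by case: ifP => _; rewrite ?size_rcons; lia.
Qed.

Lemma prefix_stack_repr_take n s :
  prefix (stack_repr sl (take n s)) (stack_repr sl s).
Proof.
case: s => [|b s]; first by rewrite /= eqxx.
case def_t: (take n (b :: s)) => [|a r]; first by rewrite /= eqxx prefix0s.
change (prefix (flatten (map (cons sl) (a :: r))) (flatten (map (cons sl) (b :: s)))).
rewrite -def_t -[in X in prefix _ X](cat_take_drop n (b :: s)).
by rewrite map_cat flatten_cat prefix_prefix.
Qed.

Lemma sanitize_step_leaves_prefix S s t : prefix (stack_repr sl s) S ->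
  ~~ prefix (stack_repr sl (sanitize_step dt s t)) S ->
  [/\ t != dot_tok dt, t != dotdot_tok dt & sanitize_step dt s t = rcons s t].
Proof.
move=> pre_s; rewrite /sanitize_step; case: ifP => [_ | /negbT not_dd].
  by rewrite (prefix_trans (prefix_stack_repr_take _ _) pre_s).
by case: ifP => [_ | /negbT not_d _]; rewrite ?pre_s.
Qed.

Section Run.
Variables toks names : seq (seq C).
Hypothesis run_toks : run dt toks = names.

Let st k := run dt (take k toks).
Let ok k := prefix (stack_repr sl (st k)) (stack_repr sl names).

Lemma st_succ l : l < size toks -> st l.+1 = sanitize_step dt (st l) (nth [::] toks l).
Proof. by move=> lt_l; rewrite /st /run (take_nth [::] lt_l) foldl_rcons. Qed.

Lemma take_st_stable M j l : j <= l <= size toks ->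
  (forall m, j <= m <= l -> M <= size (st m)) -> take M (st l) = take M (st j).
Proof.
elim: l => [|l IH] /andP [le_jl le_l] above; first by move: le_jl; rewrite leqn0 => /eqP ->.
move: le_jl; rewrite leq_eqVlt => /predU1P [-> // | lt_jl].
have M_l : M <= size (st l) by apply: above; lia.
rewrite st_succ // take_sanitize_step // -?st_succ //; last by apply: above; lia.
by apply: IH => [|m ?]; [lia | apply: above; lia].
Qed.

(* Below the height of [st j] nothing has changed, so the first drop lands on [pop (st j)]. *)
Lemma st_first_drop j l : j <= l < size toks ->
  (forall m, j <= m <= l -> size (st j) <= size (st m)) ->
  size (st l.+1) < size (st j) -> st l.+1 = take (size (st j)).-1 (st j).
Proof.
move=> /andP [le_jl lt_l] above drop; set M := size (st j) in above drop *.
have M_l : M <= size (st l) by apply: above; rewrite le_jl leqnn.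
have := size_sanitize_step_ge (st l) (nth [::] toks l); rewrite -st_succ // => ge.
have size_l1 : size (st l.+1) = M.-1 by lia.
rewrite -[st l.+1](take_oversize (eq_leq size_l1)).
apply: take_st_stable => [|m /andP [le_jm]]; first lia.
by rewrite leq_eqVlt => /predU1P [-> | ?]; [lia | have := above m; lia].
Qed.

Lemma ok0 : ok 0.
Proof. by rewrite /ok /st take0; have := prefix_stack_repr_take 0 names; rewrite take0. Qed.

Lemma size_st_ge_while_unprefixed j t l : j <= l <= size toks ->
  st j = rcons (st j.-1) t -> ok j.-1 -> (forall m, j <= m <= l -> ~~ ok m) ->
  forall m, j <= m <= l -> size (st j) <= size (st m).
Proof.
move=> /andP [le_jl le_l] push ok_prev not_ok.
have [// | [k [/andP [lt_jk le_kl] above drop]]] :=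
  stays_above_or_first_below (f := size \o st) le_jl (leqnn (size (st j))).
have back : st k = st j.-1.
  have k_pos : 0 < k by lia.
  rewrite -(prednK k_pos) (st_first_drop (j := j)) ?prednK //.
  - by rewrite push size_rcons -cats1 take_size_cat.
  - lia.
  - by move=> m ?; apply: above; lia.
by move: (not_ok k); rewrite /ok back -/(ok j.-1) ok_prev (ltnW lt_jk) le_kl => /(_ isT).
Qed.

Lemma st_shrinks_later j : j <= size toks -> ~~ ok j ->
  exists k, [/\ j < k <= size toks,
    (forall l, j <= l < k -> size (st j) <= size (st l)) & size (st k) < size (st j)].
Proof.
move=> le_j not_ok_j.
have [above | //] := stays_above_or_first_below (f := size \o st) le_j (leqnn (size (st j))).
have final : st (size toks) = names by rewrite /st take_size.
have stable : take (size (st j)) names = st j.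
  by rewrite -final (take_st_stable (j := j)) ?take_size ?le_j ?leqnn.
by move: not_ok_j; rewrite /ok -stable prefix_stack_repr_take.
Qed.

Lemma unprefixed_push_popped_later i : i <= size toks -> ~~ ok i ->
  exists j,
    [/\ 1 <= j <= i,
        nth [::] toks j.-1 != dot_tok dt /\ nth [::] toks j.-1 != dotdot_tok dt,
        ok j.-1 /\ ~~ ok j,
        (forall l, j <= l <= i -> size (st j) <= size (st l))
      & exists k,
          [/\ i < k <= size toks,
              nth [::] toks k.-1 = dotdot_tok dt,
              (forall l, j <= l < k -> size (st j) <= size (st l))
            & size (st k) < size (st j)]].
Proof.
move=> le_i not_ok_i.
have [||p /andP [le_pi ok_p] last_ok] := @ex_maxnP (fun l => (l <= i) && ok l) i.
- by exists 0; rewrite ok0.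
- by move=> l /andP [].
have lt_pi : p < i by rewrite ltn_neqAle le_pi andbT; apply: contraNneq not_ok_i => <-.
have not_ok_after m : p < m <= i -> ~~ ok m.
  by case/andP=> lt_pm le_mi; apply: contraL lt_pm => ok_m; rewrite -leqNgt last_ok ?le_mi.
have not_ok_p1 : ~~ ok p.+1 by apply: not_ok_after; rewrite ltnSn.
have step_p : st p.+1 = sanitize_step dt (st p) (nth [::] toks p).
  by apply: st_succ; apply: leq_trans le_i.
move: (not_ok_p1); rewrite /ok step_p.
case/(sanitize_step_leaves_prefix ok_p) => not_dot not_dotdot; rewrite -step_p => push.
have above_i : forall l, p.+1 <= l <= i -> size (st p.+1) <= size (st l).
  by apply: (size_st_ge_while_unprefixed (t := nth [::] toks p)); rewrite ?lt_pi.
have [k [/andP [lt_pk le_k] above_k drop]] := st_shrinks_later (leq_trans lt_pi le_i) not_ok_p1.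
have lt_ik : i < k.
  by rewrite ltnNge; apply: contraTN drop => le_ki; rewrite -leqNgt above_i // (ltnW lt_pk).
exists p.+1; split => //.
exists k; split => //; first by rewrite lt_ik.
apply: (@sanitize_step_shrinks (st k.-1)); rewrite -st_succ ?prednK //; try lia.
by apply: leq_trans drop _; apply: above_k; lia.
Qed.

End Run.
End Sanitize.

Theorem lemma3 (C : eqType) (sl dt : C) (Hsd : sl != dt)
    (fs : pred (seq (seq C))) (Htree : is_tree fs)
    (S1 S2 : seq C) (Hsame : same_file sl dt fs S1 S2)
    (Hcan : canonical sl dt S2) :
  let toks := tokens sl S1 in
  let st := fun k => run dt (take k toks) in
  forall i, 1 <= i <= size toks ->
    prefix (stack_repr sl (st i)) S2
    \/ exists j,
        [/\ 1 <= j <= i,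
            nth [::] toks j.-1 != dot_tok dt /\ nth [::] toks j.-1 != dotdot_tok dt,
            prefix (stack_repr sl (st j.-1)) S2 /\ ~~ prefix (stack_repr sl (st j)) S2,
            (forall l, j <= l <= i -> size (st j) <= size (st l))
          & exists k,
              [/\ i < k <= size toks,
                  nth [::] toks k.-1 = dotdot_tok dt,
                  (forall l, j <= l < k -> size (st j) <= size (st l))
                & size (st k) < size (st j)]].
Proof.
move=> toks st i /andP [_ le_i]; have [names [good def_S2]] := Hcan.
rewrite def_S2 in Hsame *.
have run_toks := run_tokens_same_file good Hsame.
case: (boolP (prefix (stack_repr sl (st i)) (stack_repr sl names))) => [ok_i | not_ok_i].
  by left.
by right; apply: unprefixed_push_popped_later.
Qed.
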